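(* The axioms I, II, III are mutually independent: for each $\mathsf X\in\{\mathrm I,\mathrm{II},\mathrm{III}\}$ there exists a pre-structural datum satisfying the two axioms other than $\mathsf X$ but failing $\mathsf X$. Moreover, the three subclauses (a), (b), (c) of Axiom III are mutually independent relative to Axioms I and II: for each of (a), (b), (c) there exists a pre-structural datum satisfying Axioms I and II and the other two subclauses of Axiom III, but failing that subclause.
   Context: For a nonempty set $X$, an algebra $\mathcal A\subseteq\mathcal P(X)$ contains $\varnothing,X$ and is closed under finite unions and complements. A finitely additive measure $\mu:\mathcal A\to[0,\infty)$ satisfies $\mu(\varnothing)=0$ and $\mu(B_1\sqcup B_2)=\mu(B_1)+\mu(B_2)$ for disjoint $B_1,B_2\in\mathcal A$. $\mathcal A\otimes\mathcal A$ denotes the algebra of subsets of $X\times X$ generated by rectangles $B_1\times B_2$ with $B_i\in\mathcal A$. For relations $H,K\subseteq X\times X$, $H\circ K=\{(x,z):\exists y\,(x,y)\in H,(y,z)\in K\}$. A pre-structural datum is a tuple $(X,\mathcal A,\mu,\mu^{\otimes2},R,I,\Pi_R,G,E_0,\eta)$ where: $X$ is a nonempty set; $\mathcal A$ is an algebra on $X$; $\mu$ is a finitely additive measure on $\mathcal A$; $\mu^{\otimes2}:\mathcal A\otimes\mathcal A\to[0,\infty)$ is finitely additive and satisfies $\mu^{\otimes2}(B_1\times B_2)=\mu(B_1)\mu(B_2)$ for all $B_1,B_2\in\mathcal A$; $R,I\in\mathcal A$ are disjoint; $\Pi_R:X\to R$ is a map; $G\subseteq X\times X$ with $G\in\mathcal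 A\otimes\mathcal A$; $E_0\in(0,\infty)$; $\eta\in[0,1]$. Axiom I: $\Pi_R\circ\Pi_R=\Pi_R$, $\Pi_R(r)=r$ for all $r\in R$, and $\Pi_R^{-1}(B)\in\mathcal A$ for every $B\in\mathcal A$ with $B\subseteq R$. Axiom II: $G$ is reflexive, symmetric, and $G\circ G=G$. Axiom III consists of: (a) conservation $\mu(R)+\mu(I)=E_0>0$; (b) projection–measure invariance $\mu(\Pi_R^{-1}(B))=\mu(B)$ for every $B\in\mathcal A$ with $B\subseteq R$; (c) coupling law: for all $B\in\mathcal A$, $\mu^{\otimes2}((B\times X)\cap G)=\mu(B)+\eta\,\mu^{\otimes2}((\Pi_R^{-1}(B)\times X)\cap G)$. *)

From Stdlib Require Import Reals.
Open Scope R_scope.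

Definition pset (X : Type) := X -> Prop.
Definition set0 {X : Type} : pset X := fun _ => False.
Definition setT {X : Type} : pset X := fun _ => True.
Definition setU {X : Type} (A B : pset X) : pset X := fun x => A x \/ B x.
Definition setI {X : Type} (A B : pset X) : pset X := fun x => A x /\ B x.
Definition setC {X : Type} (A : pset X) : pset X := fun x => ~ A x.
Definition subset {X : Type} (A B : pset X) : Prop := forall x, A x -> B x.
Definition disjoint {X : Type} (A B : pset X) : Prop := forall x, ~ (A x /\ B x).
Definition preimage {X Y : Type} (f : X -> Y) (B : pset Y) : pset X := fun x => B (f x).
Definition rect {X Y : Type} (B1 : pset X) (B2 : pset Y) : pset (X * Y) :=
  fun p => B1 (fst p) /\ B2 (snd p).
Definition relcomp {X : Type} (H K : pset (X * X)) : pset (X * X) :=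
  fun p => exists y, H (fst p, y) /\ K (y, snd p).

Record is_algebra {X : Type} (A : pset X -> Prop) : Prop := {
  alg_empty : A set0;
  alg_full  : A setT;
  alg_union : forall B1 B2, A B1 -> A B2 -> A (setU B1 B2);
  alg_compl : forall B, A B -> A (setC B) }.

Definition prod_algebra {X : Type} (A : pset X -> Prop) : pset (X * X) -> Prop :=
  fun S => forall C : pset (X * X) -> Prop, is_algebra C ->
    (forall B1 B2, A B1 -> A B2 -> C (rect B1 B2)) -> C S.

(* finitely additive [0,oo)-valued measure on the algebra A
   (mu is a total function; only its values on A matter) *)
Definition fa_measure {X : Type} (A : pset X -> Prop) (mu : pset X -> R) : Prop :=
  mu set0 = 0 /\
  (forall B, A B -> 0 <= mu B) /\
  (forall B1 B2, A B1 -> A B2 -> disjoint B1 B2 -> mu (setU B1 B2) = mu B1 + mu B2).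

(* pre-structural datum (X, A, mu, mu2, R, I, Pi_R, G, E0, eta);
   Pi_R : X -> R is encoded as a map X -> X whose values lie in R *)
Record predatum : Type := {
  pX : Type;
  pX_ne : inhabited pX;
  pA : pset pX -> Prop;
  pA_alg : is_algebra pA;
  pmu : pset pX -> R;
  pmu_fa : fa_measure pA pmu;
  pmu2 : pset (pX * pX) -> R;
  pmu2_fa : fa_measure (prod_algebra pA) pmu2;
  pmu2_rect : forall B1 B2, pA B1 -> pA B2 -> pmu2 (rect B1 B2) = pmu B1 * pmu B2;
  pR : pset pX;
  pI : pset pX;
  pR_A : pA pR;
  pI_A : pA pI;
  pRI_disj : disjoint pR pI;
  pPi : pX -> pX;
  pPi_R : forall x, pR (pPi x);
  pG : pset (pX * pX);
  pG_A : prod_algebra pA pG;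
  pE0 : R;
  pE0_pos : 0 < pE0;
  peta : R;
  peta_range : 0 <= peta <= 1 }.

Definition AxiomI (d : predatum) : Prop :=
  (forall x, pPi d (pPi d x) = pPi d x) /\
  (forall r, pR d r -> pPi d r = r) /\
  (forall B, pA d B -> subset B (pR d) -> pA d (preimage (pPi d) B)).

Definition AxiomII (d : predatum) : Prop :=
  (forall x, pG d (x, x)) /\
  (forall x y, pG d (x, y) -> pG d (y, x)) /\
  (forall p, relcomp (pG d) (pG d) p <-> pG d p).

Definition AxiomIIIa (d : predatum) : Prop :=
  pmu d (pR d) + pmu d (pI d) = pE0 d /\ 0 < pE0 d.

Definition AxiomIIIb (d : predatum) : Prop :=
  forall B, pA d B -> subset B (pR d) -> pmu d (preimage (pPi d) B) = pmu d B.

Definition AxiomIIIc (d : predatum) : Prop :=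
  forall B, pA d B ->
    pmu2 d (setI (rect B setT) (pG d)) =
    pmu d B + peta d * pmu2 d (setI (rect (preimage (pPi d) B) setT) (pG d)).

Definition AxiomIII (d : predatum) : Prop :=
  AxiomIIIa d /\ AxiomIIIb d /\ AxiomIIIc d.

(** All witnesses live on the two-point space [bool] with every subset
    measurable, a Bernoulli measure [mu] and its product.  Take [I] to be the
    complement of [R], so that (a) only compares the total mass [1] with [E0].
    With [eta = 0] and [G = X x C] for a set [C] of full measure the coupling
    law reads [mu(B) mu(C) = mu(B)]; this holds for [C = X], and also for
    [C = {true}] under the Dirac mass at [true], where [G] is not reflexive.
    With [G] full and [eta > 0] the coupling law fails at [B = X].  The
    projection is the identity except in two witnesses: the swap of the two
    points, which preserves the uniform measure but moves the points of
    [R = X], and the constant retraction onto [R = {true}], which satisfies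
    Axiom I but pulls [{true}] back to the whole space. *)

From Stdlib Require Import Reals Lra Classical ClassicalEpsilon
  FunctionalExtensionality PropExtensionality.
Open Scope R_scope.

Definition iverson (P : Prop) : R :=
  if excluded_middle_informative P then 1 else 0.

Lemma iverson_true (P : Prop) : P -> iverson P = 1.
Proof. unfold iverson; destruct excluded_middle_informative; tauto. Qed.

Lemma iverson_false (P : Prop) : ~ P -> iverson P = 0.
Proof. unfold iverson; destruct excluded_middle_informative; tauto. Qed.

Lemma iverson_ge0 (P : Prop) : 0 <= iverson P.
Proof. unfold iverson; destruct excluded_middle_informative; lra. Qed.

Lemma iverson_or (P Q : Prop) :
  ~ (P /\ Q) -> iverson (P \/ Q) = iverson P + iverson Q.
Proof.
  intros PQ; destruct (classic P), (classic Q);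
    repeat first [rewrite iverson_true by tauto | rewrite iverson_false by tauto];
    tauto || ring.
Qed.

Lemma iverson_and (P Q : Prop) : iverson (P /\ Q) = iverson P * iverson Q.
Proof.
  destruct (classic P), (classic Q);
    repeat first [rewrite iverson_true by tauto | rewrite iverson_false by tauto];
    ring.
Qed.

Lemma pset_ext {X : Type} (A B : pset X) : (forall x, A x <-> B x) -> A = B.
Proof.
  intros AB; apply functional_extensionality; intros x.
  apply propositional_extensionality, AB.
Qed.

Lemma disjoint_setC {X : Type} (A : pset X) : disjoint A (setC A).
Proof. intros x [Ax nAx]; exact (nAx Ax). Qed.

Lemma prod_algebra_full {X : Type} (A : pset X -> Prop) : prod_algebra A setT.
Proof. intros C C_alg _; exact (alg_full C C_alg). Qed.

Lemma prod_algebra_rect {X : Type} (A : pset X -> Prop) (B1 B2 : pset X) :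
  A B1 -> A B2 -> prod_algebra A (rect B1 B2).
Proof. intros AB1 AB2 C _ C_rect; exact (C_rect B1 B2 AB1 AB2). Qed.

Definition powerset_algebra {X : Type} : pset X -> Prop := fun _ => True.

Lemma powerset_is_algebra {X : Type} : is_algebra (@powerset_algebra X).
Proof. split; unfold powerset_algebra; auto. Qed.

Section Bernoulli.

Variable p : R.
Hypothesis p_range : 0 <= p <= 1.

Definition bernoulli (B : pset bool) : R :=
  p * iverson (B true) + (1 - p) * iverson (B false).

Definition bernoulli2 (S : pset (bool * bool)) : R :=
  p * p * iverson (S (true, true)) + p * (1 - p) * iverson (S (true, false)) +
  (1 - p) * p * iverson (S (false, true)) +
  (1 - p) * (1 - p) * iverson (S (false, false)).

Lemma bernoulli_setT : bernoulli setT = 1.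
Proof. unfold bernoulli; rewrite !iverson_true by exact I; ring. Qed.

Lemma bernoulli_fa : fa_measure powerset_algebra bernoulli.
Proof.
  unfold bernoulli; split; [|split].
  - rewrite !iverson_false by (intros []); ring.
  - intros B _.
    pose proof (iverson_ge0 (B true)); pose proof (iverson_ge0 (B false)); nra.
  - intros B1 B2 _ _ B12; unfold setU.
    rewrite !iverson_or by apply B12; ring.
Qed.

Lemma bernoulli2_fa : fa_measure (prod_algebra powerset_algebra) bernoulli2.
Proof.
  unfold bernoulli2; split; [|split].
  - rewrite !iverson_false by (intros []); ring.
  - intros S _.
    pose proof (iverson_ge0 (S (true, true))); pose proof (iverson_ge0 (S (true, false)));
    pose proof (iverson_ge0 (S (false, true))); pose proof (iverson_ge0 (S (false, false))).
    assert (0 <= p * p) by nra; assert (0 <= p * (1 - p)) by nra;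
    assert (0 <= (1 - p) * (1 - p)) by nra; nra.
  - intros S1 S2 _ _ S12; unfold setU.
    rewrite !iverson_or by apply S12; ring.
Qed.

Lemma bernoulli2_rect (B1 B2 : pset bool) :
  bernoulli2 (rect B1 B2) = bernoulli B1 * bernoulli B2.
Proof. unfold bernoulli2, bernoulli, rect; simpl; rewrite !iverson_and; ring. Qed.

End Bernoulli.

Lemma uniform_preimage_negb (B : pset bool) :
  bernoulli (1/2) (preimage negb B) = bernoulli (1/2) B.
Proof. unfold bernoulli, preimage; simpl; field. Qed.

Definition bool_datum (p : R) (p_range : 0 <= p <= 1) (Rs : pset bool)
    (Pi : bool -> bool) (Pi_R : forall x, Rs (Pi x))
    (G : pset (bool * bool)) (G_A : prod_algebra powerset_algebra G)
    (E0 : R) (E0_pos : 0 < E0) (eta : R) (eta_range : 0 <= eta <= 1) : predatum :=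
  {| pX := bool; pX_ne := inhabits true;
     pA := powerset_algebra; pA_alg := powerset_is_algebra;
     pmu := bernoulli p; pmu_fa := bernoulli_fa p p_range;
     pmu2 := bernoulli2 p; pmu2_fa := bernoulli2_fa p p_range;
     pmu2_rect := fun B1 B2 _ _ => bernoulli2_rect p B1 B2;
     pR := Rs; pI := setC Rs; pR_A := I; pI_A := I; pRI_disj := disjoint_setC Rs;
     pPi := Pi; pPi_R := Pi_R; pG := G; pG_A := G_A;
     pE0 := E0; pE0_pos := E0_pos; peta := eta; peta_range := eta_range |}.

Section AxiomCriteria.

Variable d : predatum.

Lemma axiomI_of_retraction :
  (forall B, pA d B) -> (forall r, pR d r -> pPi d r = r) -> AxiomI d.
Proof.
  intros A_all Pi_fix; split; [|split; [exact Pi_fix|]].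
  - intros x; apply Pi_fix, pPi_R.
  - intros B _ _; apply A_all.
Qed.

Lemma axiomII_full : (forall xy, pG d xy) -> AxiomII d.
Proof.
  intros G_all; split; [|split]; auto.
  intros xy; split; auto; intros _; exists (fst xy); auto.
Qed.

Lemma axiomIIIa_iff_total_mass :
  pI d = setC (pR d) -> AxiomIIIa d <-> pmu d setT = pE0 d.
Proof.
  intros I_compl.
  assert (mass_split : pmu d setT = pmu d (pR d) + pmu d (pI d)).
  { rewrite I_compl.
    replace (@setT (pX d)) with (setU (pR d) (setC (pR d)))
      by (apply pset_ext; intros x; unfold setU, setC, setT; tauto).
    pose proof (pR_A d) as R_A.
    apply (proj2 (proj2 (pmu_fa d))); auto.
    - apply (alg_compl _ (pA_alg d)), R_A.
    - apply disjoint_setC. }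
  unfold AxiomIIIa; rewrite mass_split; split; [tauto|].
  intros E0_mass; split; [exact E0_mass | apply pE0_pos].
Qed.

Lemma axiomIIIb_id : (forall x, pPi d x = x) -> AxiomIIIb d.
Proof.
  intros Pi_id B _ _.
  assert (Pi_eq : pPi d = fun x => x) by (apply functional_extensionality, Pi_id).
  unfold preimage; rewrite Pi_eq; reflexivity.
Qed.

Lemma axiomIIIc_of_cylinder_coupling (C : pset (pX d)) :
  peta d = 0 -> pA d C -> pmu d C = 1 ->
  (forall xy, pG d xy <-> C (snd xy)) -> AxiomIIIc d.
Proof.
  intros eta0 C_A C_mass G_cyl B B_A.
  replace (setI (rect B setT) (pG d)) with (rect B C).
  - rewrite pmu2_rect, eta0, C_mass by assumption; ring.
  - apply pset_ext; intros xy; unfold setI, rect, setT; rewrite G_cyl; tauto.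
Qed.

Lemma not_axiomIIIc_full :
  (forall xy, pG d xy) -> pmu d setT = 1 -> 0 < peta d -> ~ AxiomIIIc d.
Proof.
  intros G_all mass eta_pos coupling.
  pose proof (alg_full _ (pA_alg d)) as T_A.
  specialize (coupling setT T_A).
  change (preimage (pPi d) setT) with (@setT (pX d)) in coupling.
  replace (setI (rect setT setT) (pG d)) with (@rect (pX d) (pX d) setT setT)
    in coupling by (apply pset_ext; intros xy; specialize (G_all xy); unfold setI; tauto).
  rewrite pmu2_rect, mass in coupling by exact T_A; lra.
Qed.

End AxiomCriteria.

Definition datum_without_I : predatum :=
  bool_datum (1/2) ltac:(lra) setT negb (fun _ => I)
    setT (prod_algebra_full _) 1 Rlt_0_1 0 ltac:(lra).

Lemma datum_without_I_spec :
  ~ AxiomI datum_without_I /\ AxiomII datum_without_I /\ AxiomIII datum_without_I.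
Proof.
  split; [|split; [|split; [|split]]].
  - intros (_ & Pi_fix & _); discriminate (Pi_fix true I).
  - apply axiomII_full; intros; exact I.
  - apply axiomIIIa_iff_total_mass, bernoulli_setT; reflexivity.
  - intros B _ _; apply uniform_preimage_negb.
  - apply (axiomIIIc_of_cylinder_coupling _ setT);
      [reflexivity | exact I | apply bernoulli_setT | intros; cbn; tauto].
Qed.

Definition datum_without_II : predatum :=
  bool_datum 1 ltac:(lra) setT (fun x => x) (fun _ => I)
    (rect setT (fun y => y = true)) (prod_algebra_rect _ _ _ I I)
    1 Rlt_0_1 0 ltac:(lra).

Lemma datum_without_II_spec :
  AxiomI datum_without_II /\ ~ AxiomII datum_without_II /\ AxiomIII datum_without_II.
Proof.
  split; [|split; [|split; [|split]]].
  - apply axiomI_of_retraction; reflexivity.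
  - intros [G_refl _]; destruct (G_refl false) as [_ false_true]; discriminate.
  - apply axiomIIIa_iff_total_mass, bernoulli_setT; reflexivity.
  - apply axiomIIIb_id; reflexivity.
  - apply (axiomIIIc_of_cylinder_coupling datum_without_II (fun y => y = true));
      [reflexivity | exact I | | intros; cbn; unfold rect, setT; tauto].
    cbn; unfold bernoulli; rewrite iverson_true by reflexivity; ring.
Qed.

Definition datum_without_IIIa : predatum :=
  bool_datum (1/2) ltac:(lra) setT (fun x => x) (fun _ => I)
    setT (prod_algebra_full _) 2 ltac:(lra) 0 ltac:(lra).

Lemma datum_without_IIIa_spec :
  AxiomI datum_without_IIIa /\ AxiomII datum_without_IIIa /\
  ~ AxiomIIIa datum_without_IIIa /\ AxiomIIIb datum_without_IIIa /\
  AxiomIIIc datum_without_IIIa.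
Proof.
  split; [|split; [|split; [|split]]].
  - apply axiomI_of_retraction; reflexivity.
  - apply axiomII_full; intros; exact I.
  - rewrite axiomIIIa_iff_total_mass by reflexivity.
    cbn; rewrite bernoulli_setT; lra.
  - apply axiomIIIb_id; reflexivity.
  - apply (axiomIIIc_of_cylinder_coupling _ setT);
      [reflexivity | exact I | apply bernoulli_setT | intros; cbn; tauto].
Qed.

Definition datum_without_IIIb : predatum :=
  bool_datum (1/2) ltac:(lra) (fun x => x = true) (fun _ => true) (fun _ => eq_refl)
    setT (prod_algebra_full _) 1 Rlt_0_1 0 ltac:(lra).

Lemma datum_without_IIIb_spec :
  AxiomI datum_without_IIIb /\ AxiomII datum_without_IIIb /\
  AxiomIIIa datum_without_IIIb /\ ~ AxiomIIIb datum_without_IIIb /\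
  AxiomIIIc datum_without_IIIb.
Proof.
  split; [|split; [|split; [|split]]].
  - apply axiomI_of_retraction; [reflexivity | intros r ->; reflexivity].
  - apply axiomII_full; intros; exact I.
  - apply axiomIIIa_iff_total_mass, bernoulli_setT; reflexivity.
  - intros Pi_inv; specialize (Pi_inv (fun x => x = true) I (fun _ r_true => r_true)).
    revert Pi_inv; unfold preimage; cbn; unfold bernoulli.
    rewrite !iverson_true, iverson_false by discriminate || reflexivity.
    lra.
  - apply (axiomIIIc_of_cylinder_coupling _ setT);
      [reflexivity | exact I | apply bernoulli_setT | intros; cbn; tauto].
Qed.

Definition datum_without_IIIc : predatum :=
  bool_datum (1/2) ltac:(lra) setT (fun x => x) (fun _ => I)
    setT (prod_algebra_full _) 1 Rlt_0_1 1 ltac:(lra).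

Lemma datum_without_IIIc_spec :
  AxiomI datum_without_IIIc /\ AxiomII datum_without_IIIc /\
  AxiomIIIa datum_without_IIIc /\ AxiomIIIb datum_without_IIIc /\
  ~ AxiomIIIc datum_without_IIIc.
Proof.
  split; [|split; [|split; [|split]]].
  - apply axiomI_of_retraction; reflexivity.
  - apply axiomII_full; intros; exact I.
  - apply axiomIIIa_iff_total_mass, bernoulli_setT; reflexivity.
  - apply axiomIIIb_id; reflexivity.
  - apply not_axiomIIIc_full; [intros; exact I | apply bernoulli_setT | cbn; lra].
Qed.

Theorem theorem6p7 :
  (exists d : predatum, ~ AxiomI d /\ AxiomII d /\ AxiomIII d) /\
  (exists d : predatum, AxiomI d /\ ~ AxiomII d /\ AxiomIII d) /\
  (exists d : predatum, AxiomI d /\ AxiomII d /\ ~ AxiomIII d) /\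
  (exists d : predatum, AxiomI d /\ AxiomII d /\
     ~ AxiomIIIa d /\ AxiomIIIb d /\ AxiomIIIc d) /\
  (exists d : predatum, AxiomI d /\ AxiomII d /\
     AxiomIIIa d /\ ~ AxiomIIIb d /\ AxiomIIIc d) /\
  (exists d : predatum, AxiomI d /\ AxiomII d /\
     AxiomIIIa d /\ AxiomIIIb d /\ ~ AxiomIIIc d).
Proof.
  split; [|split; [|split; [|split; [|split]]]].
  - exists datum_without_I; exact datum_without_I_spec.
  - exists datum_without_II; exact datum_without_II_spec.
  - exists datum_without_IIIa.
    destruct datum_without_IIIa_spec as (axI & axII & not_a & _).
    split; [exact axI | split; [exact axII | intros [a _]; exact (not_a a)]].
  - exists datum_without_IIIa; exact datum_without_IIIa_spec.
  - exists datum_without_IIIb; exact datum_without_IIIb_spec.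
  - exists datum_without_IIIc; exact datum_without_IIIc_spec.
Qed.
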